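(* Let $R>0$, $D>0$, $k\ge0$ an integer and $n\ge k+2$. For every algorithm $\mathcal A\in\mathfrak A_{\mathrm{sep}}$, $$\sup\ \|\nabla\mathbf L(\mathbf z^k)\|^2\ \ge\ \frac{R^2D^2}{(2\lfloor k/2\rfloor+1)^2},$$ where the supremum is over all $R$-smooth convex-concave $\mathbf L$ on $\mathbb R^n\times\mathbb R^n$ having a saddle point $\mathbf z^\star$ and all starting points $\mathbf z^0$ with $\|\mathbf z^0-\mathbf z^\star\|\le D$, and $\mathbf z^k$ is the $k$-th iterate of $\mathcal A$ applied to $\mathbf L$ from $\mathbf z^0$. Consequently, the EAG-C and EAG-V algorithms, which achieve $\|\nabla\mathbf L(\mathbf z^k)\|^2=\mathcal O(R^2\|\mathbf z^0-\mathbf z^\star\|^2/k^2)$, are optimal up to a constant factor in $\mathfrak A_{\mathrm{sep}}$.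
   Context: Write $\mathbf z=(\mathbf x,\mathbf y)$. $\mathbf L$ convex-concave: convex in $\mathbf x$ for fixed $\mathbf y$, concave in $\mathbf y$ for fixed $\mathbf x$; a saddle point $(\mathbf x^\star,\mathbf y^\star)$ satisfies $\mathbf L(\mathbf x^\star,\mathbf y)\le\mathbf L(\mathbf x^\star,\mathbf y^\star)\le\mathbf L(\mathbf x,\mathbf y^\star)$ for all $\mathbf x,\mathbf y$. $\mathbf G(\mathbf z)=(\nabla_{\mathbf x}\mathbf L,-\nabla_{\mathbf y}\mathbf L)$; $R$-smooth means $\mathbf G$ is $R$-Lipschitz. A deterministic algorithm produces $\mathbf z^j=\mathcal A(\mathbf z^0,\dots,\mathbf z^{j-1};\mathbf L)$; $\mathfrak A_{\mathrm{sep}}$ is the class of such algorithms with $\mathbf x^j\in\mathbf x^0+\mathrm{span}\{\nabla_{\mathbf x}\mathbf L(\mathbf z^0),\dots,\nabla_{\mathbf x}\mathbf L(\mathbf z^{j-1})\}$ and $\mathbf y^j\in\mathbf y^0+\mathrm{span}\{\nabla_{\mathbf y}\mathbf L(\mathbf z^0),\dots,\nabla_{\mathbf y}\mathbf L(\mathbf z^{j-1})\}$ for all $j\ge1$. EAG-C: $\mathbf z^{k+1/2}=\mathbf z^k+\frac1{k+2}(\mathbf z^0-\mathbf z^k)-\alpha\mathbf G(\mathbf z^k)$, $\mathbf z^{k+1}=\mathbf z^k+\frac1{k+2}(\mathbf z^0-\mathbf z^k)-\alpha\mathbf G(\mathbf z^{k+1/2})$ with constant $\alpha$; EAG-V is the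 same with step-sizes $\alpha_k$ given by $\alpha_{k+1}=\alpha_k\big(1-\frac{1}{(k+1)(k+3)}\frac{\alpha_k^2R^2}{1-\alpha_k^2R^2}\big)$. *)

From HB Require Import structures.
From mathcomp Require Import all_boot all_order all_algebra.
From mathcomp Require Import all_classical all_reals all_analysis.
Set Implicit Arguments. Unset Strict Implicit. Unset Printing Implicit Defensive.
Import Order.TTheory GRing.Theory Num.Theory.
Import numFieldNormedType.Exports.
Local Open Scope ring_scope.
Local Open Scope classical_set_scope.

Section Defs.
Variables (R : realType) (n : nat).
Notation vec := 'rV[R]_n.
Notation pt := (vec * vec)%type.

Definition sqnorm (v : vec) : R := \sum_(i < n) (v 0 i) ^+ 2.
Definition znorm (z : pt) : R := Num.sqrt (sqnorm z.1 + sqnorm z.2).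

Definition gradx (L : vec -> vec -> R) (z : pt) : vec :=
  \row_i derive (fun x => L x z.2) z.1 (delta_mx 0 i).
Definition grady (L : vec -> vec -> R) (z : pt) : vec :=
  \row_i derive (fun y => L z.1 y) z.2 (delta_mx 0 i).

Definition Gop (L : vec -> vec -> R) (z : pt) : pt := (gradx L z, - grady L z).

Definition sqgradnorm (L : vec -> vec -> R) (z : pt) : R :=
  sqnorm (gradx L z) + sqnorm (grady L z).

Definition convex_concave (L : vec -> vec -> R) : Prop :=
  (forall y x1 x2 (t : R), 0 <= t <= 1 ->
     L (t *: x1 + (1 - t) *: x2) y <= t * L x1 y + (1 - t) * L x2 y) /\
  (forall x y1 y2 (t : R), 0 <= t <= 1 ->
     t * L x y1 + (1 - t) * L x y2 <= L x (t *: y1 + (1 - t) *: y2)).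

Definition is_saddle (L : vec -> vec -> R) (zs : pt) : Prop :=
  forall x y, L zs.1 y <= L zs.1 zs.2 /\ L zs.1 zs.2 <= L x zs.2.

Definition smooth (Rs : R) (L : vec -> vec -> R) : Prop :=
  (forall z : pt, differentiable (fun p : pt => L p.1 p.2) z) /\
  (forall z z' : pt,
     znorm (Gop L z - Gop L z') <= Rs * znorm (z - z')).

Definition problem_class (Rs : R) (L : vec -> vec -> R) : Prop :=
  smooth Rs L /\ convex_concave L /\ exists zs, is_saddle L zs.

Definition algorithm := (vec -> vec -> R) -> seq pt -> pt.

Fixpoint history (A : algorithm) (L : vec -> vec -> R) (z0 : pt) (j : nat)
  : seq pt :=
  match j with
  | 0 => [:: z0]
  | j'.+1 => let h := history A L z0 j' in rcons h (A L h)
  end.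

Definition iterate (A : algorithm) L z0 (j : nat) : pt :=
  last z0 (history A L z0 j).

(* A in A_sep (relative to the considered problem class): for all j >= 1,
   x^j in x^0 + span{grad_x L(z^0..z^{j-1})}, same for y. *)
Definition in_Asep (Rs : R) (A : algorithm) : Prop :=
  forall (L : vec -> vec -> R) (z0 : pt) (j : nat), problem_class Rs L ->
    (exists c : 'I_j -> R,
        (iterate A L z0 j).1 =
          z0.1 + \sum_(i < j) c i *: gradx L (iterate A L z0 i)) /\
    (exists c : 'I_j -> R,
        (iterate A L z0 j).2 =
          z0.2 + \sum_(i < j) c i *: grady L (iterate A L z0 i)).

Definition worst_case (Rs Dd : R) (A : algorithm) (k : nat) : \bar R :=
  ereal_sup [set e : \bar R | exists (L : vec -> vec -> R) (z0 : pt),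
      [/\ problem_class Rs L,
           (exists zs, is_saddle L zs /\ znorm (z0 - zs) <= Dd) &
           e = (sqgradnorm L (iterate A L z0 k))%:E]].
End Defs.

(* Hard instance: L(x, y) = R <B x - b, y>, where B averages each of the first
   N = 2p + 1 coordinates (p = k/2) with its cyclic successor and b = beta e_p.
   Multiplying by B or B^T extends a support interval by one coordinate on one
   side, so starting from z^0 = 0 the span condition confines x^j to the
   coordinates [p + 1 - j/2, p + j/2]; in particular x^k vanishes at coordinate 0.
   The alternating vector a = (1, -1, ..., 1) satisfies <B x, a> = x_0 because N
   is odd, hence <B x^k - b, a> = -+beta and Cauchy-Schwarz gives
   ||grad_y L(z^k)||^2 >= R^2 beta^2 / N.  The saddle point (x*, 0), B x* = b,
   has ||x*||^2 = N beta^2, and beta = D / sqrt N turns this into R^2 D^2 / N^2. *)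

From HB Require Import structures.
From mathcomp Require Import all_boot all_order all_algebra all_fingroup.
From mathcomp Require Import all_classical all_reals all_analysis.
From mathcomp Require Import zify ring lra.
Import Order.TTheory GRing.Theory Num.Theory.
Import numFieldNormedType.Exports.
Set Implicit Arguments. Unset Strict Implicit. Unset Printing Implicit Defensive.
Local Open Scope ring_scope.

Section EuclideanRows.
Variables (R : realType) (n : nat).
Implicit Types (u v w : 'rV[R]_n) (M : 'M[R]_n).

Definition vdot u v : R := (u *m v^T) 0 0.

Lemma vdotE u v : vdot u v = \sum_i u 0 i * v 0 i.
Proof. by rewrite /vdot mxE; apply: eq_bigr => i _; rewrite mxE. Qed.

Lemma sqnorm_vdot v : sqnorm v = vdot v v.
Proof. by rewrite vdotE; apply: eq_bigr => i _; rewrite expr2. Qed.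

Lemma vdotBl u v w : vdot (u - v) w = vdot u w - vdot v w.
Proof. by rewrite /vdot mulmxBl !mxE. Qed.

Lemma vdotZl (c : R) u v : vdot (c *: u) v = c * vdot u v.
Proof. by rewrite /vdot -scalemxAl mxE. Qed.

Lemma vdot_mulmxl u v M : vdot (u *m M) v = vdot u (v *m M^T).
Proof. by rewrite /vdot trmx_mul trmxK mulmxA. Qed.

Lemma vdot_deltal i v : vdot (delta_mx 0 i) v = v 0 i.
Proof. by rewrite /vdot -rowE !mxE. Qed.

Lemma vdot_deltar u i : vdot u (delta_mx 0 i) = u 0 i.
Proof.
rewrite vdotE (bigD1 i) //= big1 => [|j ji];
  by rewrite !mxE ?eqxx ?(negbTE ji) ?mulr1 ?addr0 ?mulr0.
Qed.

Lemma sqnorm_ge0 v : 0 <= sqnorm v.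
Proof. by apply: sumr_ge0 => i _; exact: sqr_ge0. Qed.

Lemma sqnorm0 : sqnorm (0 : 'rV[R]_n) = 0.
Proof. by rewrite /sqnorm big1 // => i _; rewrite mxE expr0n. Qed.

Lemma sqnormZ (c : R) v : sqnorm (c *: v) = c ^+ 2 * sqnorm v.
Proof. by rewrite /sqnorm mulr_sumr; apply: eq_bigr => i _; rewrite mxE exprMn. Qed.

Lemma sqnormN v : sqnorm (- v) = sqnorm v.
Proof. by rewrite -scaleN1r sqnormZ sqrrN expr1n mul1r. Qed.

Lemma sqnorm_col_perm (s : {perm 'I_n}) v : sqnorm (col_perm s v) = sqnorm v.
Proof.
by rewrite /sqnorm [RHS](reindex_inj (@perm_inj _ s)); apply: eq_bigr => i _; rewrite mxE.
Qed.

Lemma sqnorm_midpoint u v : sqnorm (2^-1 *: (u + v)) <= (sqnorm u + sqnorm v) / 2.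
Proof.
rewrite /sqnorm -big_split mulr_suml; apply: ler_sum => i _; rewrite !mxE.
set a := u 0 i; set b := v 0 i.
have -> : (2^-1 * (a + b)) ^+ 2 = (a ^+ 2 + b ^+ 2) / 2 - (a - b) ^+ 2 / 4 by field.
by rewrite gerBl divr_ge0 // sqr_ge0.
Qed.

Lemma sqnorm_avg_col_perm (s : {perm 'I_n}) v :
  sqnorm (2^-1 *: (v + col_perm s v)) <= sqnorm v.
Proof. by rewrite (le_trans (sqnorm_midpoint _ _)) // sqnorm_col_perm; lra. Qed.

Lemma vdot_CauchySchwarz u v : vdot u v ^+ 2 <= sqnorm u * sqnorm v.
Proof.
rewrite vdotE; set s := \sum_i _; set a := sqnorm u; set b := sqnorm v.
have [b0|b_gt0] := eqVneq b 0.
  have v0 i : v 0 i = 0.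
    apply/eqP; rewrite -sqrf_eq0 eq_le sqr_ge0 andbT -b0 /b /sqnorm.
    by rewrite (bigD1 i) //= lerDl sumr_ge0 // => j _; exact: sqr_ge0.
  by rewrite /s big1 ?expr0n ?b0 ?mulr0 // => i _; rewrite v0 mulr0.
have sq_dev : \sum_i (b * u 0 i - s * v 0 i) ^+ 2 = b * (a * b - s ^+ 2).
  rewrite (eq_bigr (fun i => b ^+ 2 * u 0 i ^+ 2 - 2 * b * s * (u 0 i * v 0 i)
                               + s ^+ 2 * v 0 i ^+ 2)); last by move=> i _; ring.
  rewrite !big_split /= sumrN -!mulr_sumr -/s -/(sqnorm u) -/(sqnorm v) -/a -/b; ring.
have : 0 <= b * (a * b - s ^+ 2).
  by rewrite -sq_dev sumr_ge0 // => i _; exact: sqr_ge0.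
by rewrite pmulr_rge0 ?lt0r ?b_gt0 ?sqnorm_ge0 // subr_ge0 mulrC.
Qed.

Definition supported_in (lo hi : nat) v :=
  forall i : 'I_n, (i < lo)%N || (hi < i)%N -> v 0 i = 0.

Lemma supported_in0 lo hi : supported_in lo hi 0.
Proof. by move=> i _; rewrite mxE. Qed.

Lemma supported_inZ lo hi (c : R) v : supported_in lo hi v -> supported_in lo hi (c *: v).
Proof. by move=> v_supp i out; rewrite mxE v_supp ?mulr0. Qed.

Lemma supported_inB lo hi u v :
  supported_in lo hi u -> supported_in lo hi v -> supported_in lo hi (u - v).
Proof. by move=> u_supp v_supp i out; rewrite !mxE u_supp ?v_supp ?subrr. Qed.

Lemma supported_in_sum lo hi m (c : 'I_m -> R) (w : 'I_m -> 'rV[R]_n) :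
  (forall j, supported_in lo hi (w j)) -> supported_in lo hi (\sum_j c j *: w j).
Proof.
by move=> w_supp i out; rewrite summxE big1 // => j _; rewrite mxE w_supp ?mulr0.
Qed.

Lemma supported_in_widen lo hi lo' hi' v : (lo' <= lo)%N -> (hi <= hi')%N ->
  supported_in lo hi v -> supported_in lo' hi' v.
Proof. by move=> le_lo le_hi v_supp i out; apply: v_supp; lia. Qed.

Lemma supported_in_delta lo hi (p : 'I_n) :
  (lo <= p <= hi)%N -> supported_in lo hi (delta_mx 0 p).
Proof. by move=> p_in i; rewrite mxE eqxx /=; case: eqP => // -> out; lia. Qed.

End EuclideanRows.

Lemma derive_affine (R : realType) (V : normedModType R) (f : V -> R) (a v : V) (d : R) :
  (forall h : R, f (h *: v + a) = f a + h * d) -> derive f a v = d.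
Proof.
move=> f_affine; rewrite /derive.
have -> : (fun h : R => h^-1 *: ((f \o shift a) (h *: v) - f a)) = (fun h => h^-1 * (h * d)).
  by apply/funext => h /=; rewrite f_affine addrC addKr.
apply: cvg_lim => //; apply: cvg_near_cst; near=> h.
have h_neq0 : h != 0 by near: h; exact: nbhs_dnbhs_neq.
by rewrite mulrA mulVf ?mul1r.
Unshelve. all: by end_near.
Qed.

Section ProductCoordinates.
Variables (R : realType) (U V : normedModType R).

Lemma differentiable_fst (z : U * V) : differentiable (@fst U V) z.
Proof.
have lin : linear (@fst U V) by [].
pose f : {linear (U * V)%type -> U} := HB.pack (@fst U V) (GRing.isLinear.Build _ _ _ _ _ lin).
by apply: (@linear_differentiable _ _ _ f) => x; exact: cvg_fst.
Qed.

Lemma differentiable_snd (z : U * V) : differentiable (@snd U V) z.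
Proof.
have lin : linear (@snd U V) by [].
pose f : {linear (U * V)%type -> V} := HB.pack (@snd U V) (GRing.isLinear.Build _ _ _ _ _ lin).
by apply: (@linear_differentiable _ _ _ f) => x; exact: cvg_snd.
Qed.

End ProductCoordinates.

Section BilinearGame.
Variables (R : realType) (n : nat) (Rs : R) (M : 'M[R]_n) (b : 'rV[R]_n).
Local Notation vec := 'rV[R]_n.

Definition bilinearL (x y : vec) : R := Rs * vdot (x *m M - b) y.

Lemma bilinearL_shiftl (h : R) (v x y : vec) :
  bilinearL (h *: v + x) y = bilinearL x y + h * (Rs * vdot (v *m M) y).
Proof.
rewrite /bilinearL !vdotE mulmxDl -scalemxAl !mulr_sumr -big_split /=.
by apply: eq_bigr => i _; rewrite !mxE; ring.
Qed.

Lemma bilinearL_shiftr (h : R) (v x y : vec) :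
  bilinearL x (h *: v + y) = bilinearL x y + h * (Rs * vdot (x *m M - b) v).
Proof.
rewrite /bilinearL !vdotE !mulr_sumr -big_split /=.
by apply: eq_bigr => i _; rewrite !mxE; ring.
Qed.

Lemma gradx_bilinearL (z : vec * vec) : gradx bilinearL z = Rs *: (z.2 *m M^T).
Proof.
apply/rowP => i; rewrite /gradx mxE [RHS]mxE; apply: derive_affine => h.
by rewrite bilinearL_shiftl vdot_mulmxl vdot_deltal.
Qed.

Lemma grady_bilinearL (z : vec * vec) : grady bilinearL z = Rs *: (z.1 *m M - b).
Proof.
apply/rowP => i; rewrite /grady mxE [RHS]mxE; apply: derive_affine => h.
by rewrite bilinearL_shiftr vdot_deltar.
Qed.

Lemma differentiable_bilinearL (z : vec * vec) :
  differentiable (fun p : vec * vec => bilinearL p.1 p.2) z.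
Proof.
have coord1 j : differentiable (fun p : vec * vec => p.1 0 j) z.
  exact: differentiable_comp (differentiable_fst z) (differentiable_coord _ 0 j).
have coord2 j : differentiable (fun p : vec * vec => p.2 0 j) z.
  exact: differentiable_comp (differentiable_snd z) (differentiable_coord _ 0 j).
have -> : (fun p : vec * vec => bilinearL p.1 p.2) = cst Rs *
    \sum_i ((\sum_j cst (M j i) * (fun p : vec * vec => p.1 0 j) - cst (b 0 i))
             * (fun p : vec * vec => p.2 0 i)) :> (vec * vec -> R).
  apply/funext => p; rewrite /bilinearL vdotE /= fct_sumE; congr (_ * _).
  apply: eq_bigr => i _; rewrite !mxE /=; congr ((_ - _) * _).
  by rewrite fct_sumE; apply: eq_bigr => j _; rewrite mulrC.
apply: differentiableM => //; apply: differentiable_sum => i.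
apply: differentiableM => //; apply: differentiableB => //.
by apply: differentiable_sum => j; apply: differentiableM.
Qed.

Lemma bilinearL_combl (t : R) (x1 x2 y : vec) :
  bilinearL (t *: x1 + (1 - t) *: x2) y = t * bilinearL x1 y + (1 - t) * bilinearL x2 y.
Proof.
rewrite /bilinearL !vdotE !mulr_sumr -big_split /= mulmxDl -!scalemxAl.
by apply: eq_bigr => i _; rewrite !mxE; ring.
Qed.

Lemma bilinearL_combr (t : R) (x y1 y2 : vec) :
  bilinearL x (t *: y1 + (1 - t) *: y2) = t * bilinearL x y1 + (1 - t) * bilinearL x y2.
Proof.
rewrite /bilinearL !vdotE !mulr_sumr -big_split /=.
by apply: eq_bigr => i _; rewrite !mxE; ring.
Qed.

Lemma convex_concave_bilinearL : convex_concave bilinearL.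
Proof. by split=> * ; rewrite (bilinearL_combl, bilinearL_combr). Qed.

Lemma smooth_bilinearL : 0 <= Rs ->
  (forall u, sqnorm (u *m M) <= sqnorm u) -> (forall u, sqnorm (u *m M^T) <= sqnorm u) ->
  smooth Rs bilinearL.
Proof.
move=> Rs_ge0 M_contr Mt_contr; split=> [z|z z']; first exact: differentiable_bilinearL.
rewrite /znorm /Gop /= !gradx_bilinearL !grady_bilinearL.
have -> : Rs *: (z.2 *m M^T) - Rs *: (z'.2 *m M^T) = Rs *: ((z.2 - z'.2) *m M^T).
  by rewrite mulmxBl scalerBr.
have -> : - (Rs *: (z.1 *m M - b)) - - (Rs *: (z'.1 *m M - b)) =
           - (Rs *: ((z.1 - z'.1) *m M)).
  by rewrite mulmxBl; apply/rowP => i; rewrite !mxE; ring.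
rewrite sqnormN !sqnormZ -mulrDr sqrtrM ?sqr_ge0 // sqrtr_sqr ger0_norm //.
by rewrite ler_wpM2l // ler_wsqrtr // addrC lerD.
Qed.

Lemma bilinearL_solution (xs y : vec) : xs *m M = b -> bilinearL xs y = 0.
Proof.
by move=> xsM; rewrite /bilinearL xsM subrr vdotE big1 ?mulr0 // => i _; rewrite mxE mul0r.
Qed.

Lemma bilinearL_x0 (x : vec) : bilinearL x 0 = 0.
Proof. by rewrite /bilinearL vdotE big1 ?mulr0 // => i _; rewrite !mxE mulr0. Qed.

Lemma is_saddle_bilinearL (xs : vec) : xs *m M = b -> is_saddle bilinearL (xs, 0).
Proof. by move=> xsM x y /=; rewrite !bilinearL_x0 bilinearL_solution. Qed.

End BilinearGame.

Section CyclicAveraging.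
Variables (R : realType) (n N : nat).
Hypothesis N_le_n : (N <= n)%N.
Local Notation vec := 'rV[R]_n.

Definition cycle_succn (i : nat) : nat :=
  if (i.+1 < N)%N then i.+1 else if (i < N)%N then 0 else i.

Lemma cycle_succn_lt (i : 'I_n) : (cycle_succn i < n)%N.
Proof. by have := ltn_ord i; rewrite /cycle_succn; do ![case: ifPn => ?]; lia. Qed.

Lemma cycle_succn_inj (i j : 'I_n) : cycle_succn i = cycle_succn j -> i = j.
Proof.
move=> eq_ij; apply: val_inj => /=; move: eq_ij.
by rewrite /cycle_succn; do ![case: ifPn => ?]; lia.
Qed.

Definition cycle_succ (i : 'I_n) : 'I_n := Ordinal (cycle_succn_lt i).

Lemma cycle_succ_inj : injective cycle_succ.
Proof. by move=> i j /(congr1 val) /cycle_succn_inj. Qed.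

Definition cycle_perm : {perm 'I_n} := perm cycle_succ_inj.

Lemma val_cycle_perm i : (cycle_perm i : nat) = cycle_succn i.
Proof. by rewrite permE. Qed.

Definition cycle_avg : 'M[R]_n := 2^-1 *: (1%:M + perm_mx cycle_perm^-1).

Lemma mul_cycle_avg (x : vec) : x *m cycle_avg = 2^-1 *: (x + col_perm cycle_perm x).
Proof. by rewrite /cycle_avg -scalemxAr mulmxDr mulmx1 col_permE. Qed.

Lemma mul_cycle_avg_tr (y : vec) :
  y *m cycle_avg^T = 2^-1 *: (y + col_perm cycle_perm^-1 y).
Proof.
rewrite /cycle_avg linearZ linearD /= trmx1 tr_perm_mx invgK.
by rewrite -scalemxAr mulmxDr mulmx1 col_permE invgK.
Qed.

Lemma sqnorm_mul_cycle_avg (x : vec) : sqnorm (x *m cycle_avg) <= sqnorm x.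
Proof. by rewrite mul_cycle_avg sqnorm_avg_col_perm. Qed.

Lemma sqnorm_mul_cycle_avg_tr (y : vec) : sqnorm (y *m cycle_avg^T) <= sqnorm y.
Proof. by rewrite mul_cycle_avg_tr sqnorm_avg_col_perm. Qed.

Lemma supported_in_mul_cycle_avg lo hi (x : vec) :
  supported_in lo.+1 hi x -> supported_in lo hi (x *m cycle_avg).
Proof.
move=> x_supp i out; rewrite mul_cycle_avg !mxE x_supp ?x_supp ?addr0 ?mulr0 //; first lia.
by rewrite val_cycle_perm /cycle_succn; do ![case: ifPn => ?]; lia.
Qed.

Lemma supported_in_mul_cycle_avg_tr lo hi (y : vec) : (0 < lo)%N -> (hi.+1 < N)%N ->
  supported_in lo hi y -> supported_in lo hi.+1 (y *m cycle_avg^T).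
Proof.
move=> lo_gt0 hi_lt y_supp i out.
rewrite mul_cycle_avg_tr !mxE y_supp ?y_supp ?addr0 ?mulr0 //; first lia.
have := val_cycle_perm ((cycle_perm^-1)%g i); rewrite permKV /cycle_succn.
by do ![case: ifPn => ?]; lia.
Qed.

Lemma sqnorm_prefix_const (v : vec) (c : R) :
  (forall j : 'I_n, v 0 j ^+ 2 = if (j < N)%N then c ^+ 2 else 0) ->
  sqnorm v = N%:R * c ^+ 2.
Proof.
move=> v2; rewrite /sqnorm (eq_bigr _ (fun j _ => v2 j)) -big_mkcond /=.
by rewrite big_ord_narrow // sumr_const card_ord mulr_natl.
Qed.

Definition alt_sign : vec := \row_j (if (j < N)%N then (-1) ^+ j else 0).

Lemma sqnorm_alt_sign : sqnorm alt_sign = N%:R.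
Proof.
rewrite (@sqnorm_prefix_const _ 1) ?expr1n ?mulr1 // => j.
by rewrite mxE; case: ifP; rewrite ?sqrr_sign ?expr0n.
Qed.

Lemma vdot_mul_cycle_avg_alt_sign (x : vec) :
  (forall i : 'I_n, i = 0%N :> nat -> x 0 i = 0) -> vdot (x *m cycle_avg) alt_sign = 0.
Proof.
move=> x0; rewrite vdot_mulmxl mul_cycle_avg_tr vdotE big1 // => i _.
have [i0|i_neq0] := eqVneq (i : nat) 0%N; first by rewrite x0 ?mul0r.
rewrite !mxE; set j := (cycle_perm^-1)%g i.
have := val_cycle_perm j; rewrite permKV /cycle_succn.
case: ifPn => [j1_lt ->|_]; first by rewrite ifT // ifT 1?ltnW // exprS mulN1r addNr !mulr0.
case: ifPn => [_ i0|j_ge ->]; first by rewrite i0 in i_neq0.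
by rewrite (negbTE j_ge) addr0 !mulr0.
Qed.

Lemma residual_lower_bound (x : vec) (p : 'I_n) (beta : R) : (p < N)%N ->
  (forall i : 'I_n, i = 0%N :> nat -> x 0 i = 0) ->
  beta ^+ 2 <= N%:R * sqnorm (x *m cycle_avg - beta *: delta_mx 0 p).
Proof.
move=> p_lt x0; rewrite mulrC -sqnorm_alt_sign.
have := vdot_CauchySchwarz (x *m cycle_avg - beta *: delta_mx 0 p) alt_sign.
rewrite vdotBl vdot_mul_cycle_avg_alt_sign // vdotZl vdot_deltal mxE p_lt.
by rewrite sub0r sqrrN exprMn sqrr_sign mulr1.
Qed.

Section OddCycle.
Variables (p : 'I_n) (beta : R).
Hypothesis N_odd : N = (2 * p + 1)%N.

Definition xstar : vec :=
  \row_j (if (j < N)%N then beta * (-1) ^+ (p + j + (p < j)%N) else 0).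

Lemma mul_cycle_avg_xstar : xstar *m cycle_avg = beta *: delta_mx 0 p.
Proof.
have sgn k : (-1) ^+ k = (if odd k then -1 else 1) :> R by rewrite -signr_odd; case: odd.
apply/rowP => j; rewrite mul_cycle_avg !mxE eqxx -(inj_eq val_inj) /= val_cycle_perm.
move E: (cycle_succn j) => k; move: E; rewrite /cycle_succn !sgn.
by do ![case: ifPn => ?]; do ?[case: eqP => ?]; first [lia | move=> _ /=; lra].
Qed.

Lemma sqnorm_xstar : sqnorm xstar = N%:R * beta ^+ 2.
Proof.
apply: sqnorm_prefix_const => j; rewrite mxE.
by case: ifP; rewrite ?exprMn ?sqrr_sign ?mulr1 ?expr0n.
Qed.

End OddCycle.

End CyclicAveraging.

Section SeparableIterates.
Variables (R : realType) (n : nat) (Rs : R) (A : algorithm R n).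
Variable L : 'rV[R]_n -> 'rV[R]_n -> R.
Hypotheses (A_sep : in_Asep Rs A) (L_class : problem_class Rs L).
Local Notation z j := (iterate A L (0, 0) j).

Lemma iterate_supported_x j lo hi :
  (forall i, (i < j)%N -> supported_in lo hi (gradx L (z i))) -> supported_in lo hi (z j).1.
Proof.
move=> grad_supp; have [[c ->] _] := A_sep (0, 0) j L_class.
by rewrite add0r; apply: supported_in_sum => i; exact: grad_supp.
Qed.

Lemma iterate_supported_y j lo hi :
  (forall i, (i < j)%N -> supported_in lo hi (grady L (z i))) -> supported_in lo hi (z j).2.
Proof.
move=> grad_supp; have [_ [c ->]] := A_sep (0, 0) j L_class.
by rewrite add0r; apply: supported_in_sum => i; exact: grad_supp.
Qed.

End SeparableIterates.

Section HardInstance.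
Variables (R : realType) (n : nat) (p : 'I_n) (Rs beta : R).
Local Notation N := (2 * p + 1)%N.
Hypothesis N_le_n : (N <= n)%N.

Definition hardL := bilinearL Rs (cycle_avg R N_le_n) (beta *: delta_mx 0 p).

Lemma is_saddle_hardL : is_saddle hardL (xstar N p beta, 0).
Proof. by apply: is_saddle_bilinearL; rewrite mul_cycle_avg_xstar. Qed.

Lemma hardL_gradient_lower_bound (z : 'rV[R]_n * 'rV[R]_n) :
  (forall i : 'I_n, i = 0%N :> nat -> z.1 0 i = 0) ->
  Rs ^+ 2 * beta ^+ 2 <= N%:R * sqgradnorm hardL z.
Proof.
move=> z10; rewrite /sqgradnorm grady_bilinearL sqnormZ.
have p_lt : (p < N)%N by lia.
have res_bound := residual_lower_bound N_le_n beta p_lt z10.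
rewrite mulrDr [X in _ + X]mulrCA ler_wpDl ?mulr_ge0 ?sqnorm_ge0 //.
by apply: ler_wpM2l; first exact: sqr_ge0.
Qed.

Hypothesis Rs_ge0 : 0 <= Rs.

Lemma problem_class_hardL : problem_class Rs hardL.
Proof.
split.
  apply: smooth_bilinearL => // u.
    exact: sqnorm_mul_cycle_avg.
  exact: sqnorm_mul_cycle_avg_tr.
split; first exact: convex_concave_bilinearL.
by exists (xstar N p beta, 0); exact: is_saddle_hardL.
Qed.

Lemma hardL_iterates_supported (A : algorithm R n) (j : nat) :
  in_Asep Rs A -> (j <= N)%N ->
  supported_in (p.+1 - j./2) (p + j./2) (iterate A hardL (0, 0) j).1 /\
  supported_in (p - j.-1./2) (p + j.-1./2) (iterate A hardL (0, 0) j).2.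
Proof.
move=> A_sep; elim/ltn_ind: j => j IH j_lt; have i_lt i : (i < j)%N -> (i <= N)%N by lia.
split.
  apply: (iterate_supported_x A_sep problem_class_hardL) => i ij.
  rewrite gradx_bilinearL; apply: supported_inZ.
  have [-> | i_gt0] := posnP i; first by rewrite mul0mx; exact: supported_in0.
  have y_supp := (IH i ij (i_lt i ij)).2.
  apply: supported_in_widen (supported_in_mul_cycle_avg_tr _ _ _ y_supp); lia.
apply: (iterate_supported_y A_sep problem_class_hardL) => i ij.
rewrite grady_bilinearL; apply/supported_inZ/supported_inB.
  have x_supp := (IH i ij (i_lt i ij)).1.
  apply: (@supported_in_widen _ _ (p - i./2) (p + i./2)); [lia | lia |].
  apply: supported_in_mul_cycle_avg; apply: supported_in_widen x_supp; lia.
by apply/supported_inZ/supported_in_delta; lia.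
Qed.

End HardInstance.

Theorem corollary3 (R : realType) (Rs Dd : R) (k n : nat) :
  0 < Rs -> 0 < Dd -> (k.+2 <= n)%N ->
  forall A : algorithm R n, in_Asep Rs A ->
  ((Rs ^+ 2 * Dd ^+ 2 / ((2 * k./2 + 1)%N%:R) ^+ 2)%:E
     <= worst_case Rs Dd A k)%E.
Proof.
move=> Rs_gt0 Dd_gt0 k2_le_n A A_sep.
have p_lt : (k./2 < n)%N by lia.
pose p := Ordinal p_lt; have N_le_n : (2 * p + 1 <= n)%N by rewrite /=; lia.
set N := (2 * k./2 + 1)%N; have N_gt0 : (0 : R) < N%:R by rewrite ltr0n /N addn1.
pose beta := Dd / Num.sqrt N%:R.
have beta2 : N%:R * beta ^+ 2 = Dd ^+ 2.
  by rewrite exprMn exprVn sqr_sqrtr ?ltW // mulrCA divff ?mulr1 // gt_eqF.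
pose L := hardL Rs beta N_le_n.
have Rs_ge0 := ltW Rs_gt0.
apply: (@le_trans _ _ (sqgradnorm L (iterate A L (0, 0) k))%:E); last first.
  apply: ereal_sup_ubound; exists L, (0, 0); split=> //; first exact: problem_class_hardL.
  exists (xstar N p beta, 0); split; first exact: is_saddle_hardL.
  rewrite /znorm /= !sub0r oppr0 sqnormN sqnorm0 addr0 (sqnorm_xstar N_le_n) /= beta2.
  by rewrite sqrtr_sqr ger0_norm // ltW.
have x0 : forall i : 'I_n, i = 0%N :> nat -> (iterate A L (0, 0) k).1 0 i = 0.
  move=> i i0; apply: (hardL_iterates_supported beta N_le_n Rs_ge0 A_sep _).1;
    by rewrite /p /= ?i0; lia.
have := hardL_gradient_lower_bound Rs beta N_le_n x0.
rewrite lee_fin -beta2 => bound.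
have -> : Rs ^+ 2 * (N%:R * beta ^+ 2) / N%:R ^+ 2 = Rs ^+ 2 * beta ^+ 2 / N%:R.
  by field; rewrite gt_eqF.
by rewrite ler_pdivrMr // [X in _ <= X]mulrC.
Qed.
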